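(* Let $f(w)=\frac12 w^TAw-b^Tw+c$ with $A\in\mathbb{R}^{n\times n}$ symmetric positive definite, $b\in\mathbb{R}^n$, $c\in\mathbb{R}$. Let $x^k\in\mathbb{R}^n$ with $\nabla f(x^k)\ne 0$, let $t_k=\frac{2\|\nabla f(x^k)\|^2}{\nabla f(x^k)^TA\nabla f(x^k)}$ and $y^k=x^k-t_k\nabla f(x^k)$, and assume $\nabla f(x^k)$ and $\nabla f(y^k)$ are linearly independent. Let $g_x=\nabla f(x^k)$, $g_y=\nabla f(y^k)$, and define $$\Delta_k=\langle g_y,Ag_y\rangle\langle g_x,Ag_x\rangle-\langle g_x,Ag_y\rangle^2,$$ $$\alpha_k=\frac{\langle g_y,g_x\rangle\langle g_x,Ag_y\rangle-\langle g_x,g_x\rangle\langle g_y,Ag_y\rangle}{\Delta_k},\qquad \beta_k=\frac{-\langle g_y,g_x\rangle\langle g_x,Ag_x\rangle+\langle g_x,g_x\rangle\langle g_y,Ag_x\rangle}{\Delta_k},$$ and $x^{k+1}=x^k+\alpha_kg_x+\beta_kg_y$. Let $\Pi_k=\{x^k+\alpha g_x+\beta g_y:\alpha,\beta\in\mathbb{R}\}$ and $L_k=\{x\in\mathbb{R}^n: f(x)=f(x^k)\}$, and $E_k=\Pi_k\cap L_k$. Then: $\Delta_k>0$; $E_k$ is an ellipse contained in the two-dimensional affine plane $\Pi_k$ which contains $x^k$ and $y^k$, with $E_k$ orthogonal to $g_x$ at $x^k$ (i.e., $g_x$ is orthogonal to the tangent line of $E_k$ at $x^k$) and orthogonal to $g_y$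 at $y^k$; and $x^{k+1}$ is both the unique minimizer of $f$ on $\Pi_k$ and the center of the ellipse $E_k$.
   Context: $\langle u,v\rangle=u^Tv$, $\|\cdot\|$ the Euclidean norm, $\nabla f(w)=Aw-b$. *)

From HB Require Import structures.
From mathcomp Require Import all_boot all_order all_algebra.
From mathcomp Require Import boolp classical_sets reals.
Set Implicit Arguments. Unset Strict Implicit. Unset Printing Implicit Defensive.
Import Order.TTheory GRing.Theory Num.Theory.
Local Open Scope ring_scope.
Local Open Scope classical_set_scope.

Definition dotv {R : realType} {n : nat} (u v : 'cV[R]_n) : R := (u^T *m v) 0 0.

Definition sym_posdef {R : realType} {n : nat} (A : 'M[R]_n) : Prop :=
  A^T = A /\ forall v : 'cV[R]_n, v != 0 -> 0 < dotv v (A *m v).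

Definition quadf {R : realType} {n : nat} (A : 'M[R]_n) (b : 'cV[R]_n) (c : R)
  (w : 'cV[R]_n) : R := 2^-1 * dotv w (A *m w) - dotv b w + c.

Definition gradq {R : realType} {n : nat} (A : 'M[R]_n) (b w : 'cV[R]_n)
  : 'cV[R]_n := A *m w - b.

Definition aplane {R : realType} {n : nat} (x u v : 'cV[R]_n) : set 'cV[R]_n :=
  [set z | exists a b : R, z = x + a *: u + b *: v].

(* The ellipse with center p and linearly independent conjugate semi-axes
   e1, e2: image of the unit circle under s,t |-> p + s e1 + t e2. *)
Definition ellipse {R : realType} {n : nat} (p e1 e2 : 'cV[R]_n) : set 'cV[R]_n :=
  [set z | exists s t : R, s ^+ 2 + t ^+ 2 = 1 /\ z = p + s *: e1 + t *: e2].

Definition ellipse_tangent {R : realType} {n : nat} (e1 e2 : 'cV[R]_n) (s t : R)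
  : 'cV[R]_n := (- t) *: e1 + s *: e2.

From HB Require Import structures.
From mathcomp Require Import all_boot all_order all_algebra.
From mathcomp Require Import boolp classical_sets reals.
From mathcomp Require Import ring lra.
Import Order.TTheory GRing.Theory Num.Theory.
Local Open Scope ring_scope.
Local Open Scope classical_set_scope.
Set Implicit Arguments. Unset Strict Implicit. Unset Printing Implicit Defensive.

(* On the plane [Pi_k], [f] is a positive definite quadratic in the two
   coordinates along [gx] and [gy], whose Gram matrix has determinant
   [Delta > 0].  The coefficients [alpha], [beta] solve its normal equations, so
   [grad f(xk1)] is orthogonal to [Pi_k] and [f(xk1 + w) = f(xk1) + <w, A w>/2]
   for [w] parallel to [Pi_k]: [xk1] is the strict minimizer, and each level set
   of [f] in [Pi_k] is an "A-circle" around [xk1], i.e. the ellipse spanned by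
   any A-orthogonal pair of directions of the right A-length.  At the point
   [xk1 + s e1 + t e2] the gradient is [A (s e1 + t e2)], which is A-orthogonal
   to the tangent [-t e1 + s e2].  Finally, [yk] lies on the level of [xk]. *)

Section InnerProduct.
Variables (R : realType) (n : nat).
Implicit Types (u v w : 'cV[R]_n) (A : 'M[R]_n).

Lemma dotvC u v : dotv u v = dotv v u.
Proof. by rewrite /dotv -{1}[u^T *m v]trmxK trmx_mul trmxK mxE. Qed.

Lemma dotvDl u v w : dotv (u + v) w = dotv u w + dotv v w.
Proof. by rewrite /dotv linearD mulmxDl mxE. Qed.

Lemma dotvDr u v w : dotv w (u + v) = dotv w u + dotv w v.
Proof. by rewrite dotvC dotvDl !(dotvC w). Qed.

Lemma dotvZl k u w : dotv (k *: u) w = k * dotv u w.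
Proof. by rewrite /dotv linearZ -scalemxAl mxE. Qed.

Lemma dotvZr k u w : dotv w (k *: u) = k * dotv w u.
Proof. by rewrite dotvC dotvZl dotvC. Qed.

Lemma dotvNl u w : dotv (- u) w = - dotv u w.
Proof. by rewrite -scaleN1r dotvZl mulN1r. Qed.

Lemma dotvv_gt0 v : v != 0 -> 0 < dotv v v.
Proof.
move=> v0; have dotvE : dotv v v = \sum_i v i 0 ^+ 2.
  by rewrite /dotv !mxE; apply: eq_bigr => i _; rewrite !mxE expr2.
rewrite dotvE lt_def sumr_ge0 ?andbT => [|i _]; last exact: sqr_ge0.
apply: contra v0; rewrite psumr_eq0 => [/allP v_eq0|i _]; last exact: sqr_ge0.
apply/eqP/matrixP => i j; rewrite ord1 mxE.
by apply/eqP; rewrite -sqrf_eq0; apply: v_eq0; rewrite mem_index_enum.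
Qed.

Lemma dotv_mulmx_sym A u v : A^T = A -> dotv u (A *m v) = dotv v (A *m u).
Proof. by move=> symA; rewrite [RHS]dotvC /dotv mulmxA trmx_mul symA. Qed.

Lemma dotv_mulmx_comb2 A e1 e2 s1 t1 s2 t2 :
  dotv (s1 *: e1 + t1 *: e2) (A *m (s2 *: e1 + t2 *: e2)) =
    s1 * s2 * dotv e1 (A *m e1) + s1 * t2 * dotv e1 (A *m e2)
    + t1 * s2 * dotv e2 (A *m e1) + t1 * t2 * dotv e2 (A *m e2).
Proof. by rewrite mulmxDr -!scalemxAr !dotvDl !dotvDr !dotvZl !dotvZr; ring. Qed.

End InnerProduct.

Lemma free2P (R : realType) (n : nat) (u v : 'cV[R]_n) :
  reflect (forall s t : R, s *: u + t *: v = 0 -> s = 0 /\ t = 0) (free [:: u; v]).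
Proof.
rewrite free_cons seq1_free span_seq1; apply: (iffP andP) => [[uNv v0] s t stuv|uv0].
  have s0 : s = 0.
    apply: contraNeq uNv => s0; apply/vlineP; exists (- t / s).
    apply: (scalerI s0); rewrite scalerA mulrCA mulfV // mulr1 scaleNr.
    by apply/eqP; rewrite -addr_eq0 stuv.
  split=> //; move: stuv; rewrite s0 scale0r add0r => /eqP.
  by rewrite scaler_eq0 (negPf v0) orbF => /eqP.
split.
  apply/negP => /vlineP[k uk]; have [] := uv0 1 (- k).
    by rewrite scale1r uk scaleNr subrr.
  by move/eqP; rewrite oner_eq0.
apply/eqP => v0; have [] := uv0 0 1; first by rewrite v0 scale0r scaler0 addr0.
by move=> _ /eqP; rewrite oner_eq0.
Qed.

Section QuadraticFunction.
Variables (R : realType) (n : nat) (A : 'M[R]_n) (b : 'cV[R]_n) (c : R).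
Hypothesis symA : A^T = A.

Lemma gradqD x v : gradq A b (x + v) = gradq A b x + A *m v.
Proof. by rewrite /gradq mulmxDr addrAC. Qed.

Lemma quadfD x v :
  quadf A b c (x + v) = quadf A b c x + dotv (gradq A b x) v + 2^-1 * dotv v (A *m v).
Proof.
rewrite /quadf /gradq mulmxDr !dotvDl !dotvDr ?dotvDl dotvNl.
by rewrite (dotv_mulmx_sym x v symA) (dotvC (A *m x) v); lra.
Qed.

(* The parabola [t |-> f (x - t g)] is symmetric about the exact line-search
   step [<g, g> / <g, A g>]. *)
Lemma quadf_double_cauchy_step x :
  let g := gradq A b x in
  dotv g (A *m g) != 0 ->
  quadf A b c (x - (2 * dotv g g / dotv g (A *m g)) *: g) = quadf A b c x.
Proof.
move=> g gAg0; rewrite -scaleNr quadfD -/g -scalemxAr dotvZr !dotvZl dotvZr.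
by field.
Qed.

End QuadraticFunction.

Section AffinePlane.
Variables (R : realType) (n : nat).
Implicit Types (x y z u v : 'cV[R]_n).

Lemma aplane_base x u v : aplane x u v x.
Proof. by exists 0, 0; rewrite !scale0r !addr0. Qed.

Lemma aplane0_dir1 u v : aplane 0 u v u.
Proof. by exists 1, 0; rewrite scale1r scale0r add0r addr0. Qed.

Lemma aplane0_dir2 u v : aplane 0 u v v.
Proof. by exists 0, 1; rewrite scale1r scale0r !add0r. Qed.

Lemma aplane_sub x y u v (u' v' : 'cV[R]_n) :
  aplane x u' v' y -> aplane 0 u' v' u -> aplane 0 u' v' v ->
  aplane y u v `<=` aplane x u' v'.
Proof.
move=> [a [b ->]] [a1 [b1 ->]] [a2 [b2 ->]] _ [s [t ->]].
exists (a + s * a1 + t * a2), (b + s * b1 + t * b2).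
by apply/matrixP => i j; rewrite !mxE; ring.
Qed.

Lemma aplane_recenter x y u v : aplane x u v y -> aplane x u v = aplane y u v.
Proof.
move=> xy; have [a [b yE]] := xy; apply/seteqP; split; last first.
  exact: aplane_sub xy (aplane0_dir1 u v) (aplane0_dir2 u v).
apply: aplane_sub (aplane0_dir1 u v) (aplane0_dir2 u v).
by exists (- a), (- b); rewrite yE; apply/matrixP => i j; rewrite !mxE; ring.
Qed.

Lemma aplane_subr x u v z : aplane x u v z -> aplane 0 u v (z - x).
Proof.
move=> [s [t ->]]; exists s, t.
by apply/matrixP => i j; rewrite !mxE; ring.
Qed.

End AffinePlane.

Section PlaneRestriction.
Variables (R : realType) (n : nat) (A : 'M[R]_n) (b u v : 'cV[R]_n).
Hypothesis symA : A^T = A.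
Hypothesis posA : forall w : 'cV[R]_n, w != 0 -> 0 < dotv w (A *m w).
Hypothesis free_uv : free [:: u; v].

Let a := dotv u (A *m u).
Let p := dotv u (A *m v).
Let d := dotv v (A *m v).
Let Delta := d * a - p ^+ 2.

Lemma plane_formE s1 t1 s2 t2 :
  dotv (s1 *: u + t1 *: v) (A *m (s2 *: u + t2 *: v)) =
    s1 * s2 * a + (s1 * t2 + t1 * s2) * p + t1 * t2 * d.
Proof. by rewrite dotv_mulmx_comb2 (dotv_mulmx_sym v u symA) -/a -/p -/d; ring. Qed.

Lemma plane_dir1_gt0 : 0 < a.
Proof. by apply: posA; apply: free_not0 free_uv _; rewrite mem_head. Qed.

Lemma gram_det_gt0 : 0 < Delta.
Proof.
have w0 : p *: u + (- a) *: v != 0.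
  apply/negP => /eqP /(free2P _ _ free_uv) [_ /eqP].
  by rewrite oppr_eq0 gt_eqF // plane_dir1_gt0.
rewrite -(pmulr_rgt0 _ plane_dir1_gt0).
have -> : a * Delta = dotv (p *: u + (- a) *: v) (A *m (p *: u + (- a) *: v)).
  by rewrite plane_formE /Delta; ring.
exact: posA.
Qed.

Lemma plane_center_orth x alpha beta :
  alpha * a + beta * p = - dotv (gradq A b x) u ->
  alpha * p + beta * d = - dotv (gradq A b x) v ->
  forall w, aplane 0 u v w -> dotv (gradq A b (x + alpha *: u + beta *: v)) w = 0.
Proof.
move=> eq_u eq_v _ [s [t ->]]; rewrite add0r -addrA gradqD dotvDl.
rewrite [dotv (A *m _) _]dotvC plane_formE !dotvDr !dotvZr.
rewrite -[dotv _ u]opprK -[dotv _ v]opprK -eq_u -eq_v; ring.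
Qed.

Variable r : R.
Hypothesis r_gt0 : 0 < r.

Let k1 := Num.sqrt (r / a).
Let k2 := Num.sqrt (r / (a * Delta)).

(* [a v - p u] is the A-orthogonal complement of [u] in the plane, and both
   axes are scaled to have [<e, A e> = r]. *)
Definition ellipse_axis1 := k1 *: u.
Definition ellipse_axis2 := k2 *: (a *: v - p *: u).
Local Notation e1 := ellipse_axis1.
Local Notation e2 := ellipse_axis2.

Let k1_gt0 : 0 < k1.
Proof. by rewrite sqrtr_gt0 divr_gt0 // plane_dir1_gt0. Qed.

Let k2_gt0 : 0 < k2.
Proof. by rewrite sqrtr_gt0 divr_gt0 // mulr_gt0 // ?plane_dir1_gt0 ?gram_det_gt0. Qed.

Lemma ellipse_axes_coordE s t :
  s *: e1 + t *: e2 = (s * k1 - t * k2 * p) *: u + (t * k2 * a) *: v.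
Proof.
rewrite /ellipse_axis1 /ellipse_axis2.
by apply/matrixP => i j; rewrite !mxE; ring.
Qed.

Lemma ellipse_axes_formE s1 t1 s2 t2 :
  dotv (s1 *: e1 + t1 *: e2) (A *m (s2 *: e1 + t2 *: e2)) = (s1 * s2 + t1 * t2) * r.
Proof.
have a_gt0 := plane_dir1_gt0; have D_gt0 := gram_det_gt0.
rewrite !ellipse_axes_coordE plane_formE.
transitivity (s1 * s2 * (k1 ^+ 2 * a) + t1 * t2 * (k2 ^+ 2 * (a * Delta))).
  by rewrite /Delta; ring.
rewrite !sqr_sqrtr ?ltW ?divr_gt0 ?mulr_gt0 //.
by field; rewrite !gt_eqF.
Qed.

Lemma free_ellipse_axes : free [:: e1; e2].
Proof.
apply/free2P => s t st0; have := ellipse_axes_formE s t s t.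
rewrite st0 /dotv !mulmx0 mxE => /esym/eqP.
rewrite mulf_eq0 (gt_eqF r_gt0) orbF -!expr2 paddr_eq0 ?sqr_ge0 // !sqrf_eq0.
by move=> /andP[/eqP s0 /eqP t0].
Qed.

Lemma aplane_ellipse_axes x : aplane x e1 e2 = aplane x u v.
Proof.
have a_gt0 := plane_dir1_gt0.
have coord_axes s t : aplane 0 e1 e2 ((s * k1 - t * k2 * p) *: u + (t * k2 * a) *: v).
  by exists s, t; rewrite add0r ellipse_axes_coordE.
apply/seteqP; split; apply: aplane_sub (aplane_base _ _ _) _ _.
- by exists k1, 0; rewrite /ellipse_axis1 add0r scale0r addr0.
- exists (- (k2 * p)), (k2 * a); rewrite /ellipse_axis2 add0r.
  by apply/matrixP => i j; rewrite !mxE; ring.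
- have := coord_axes k1^-1 0.
  by rewrite mulVf ?gt_eqF // !mul0r subr0 scale1r scale0r addr0.
- have := coord_axes (p / (a * k1)) (a * k2)^-1.
  have -> : p / (a * k1) * k1 - (a * k2)^-1 * k2 * p = 0 by field; rewrite !gt_eqF.
  have -> : (a * k2)^-1 * k2 * a = 1 by field; rewrite !gt_eqF.
  by rewrite scale0r scale1r add0r.
Qed.

Variable m : 'cV[R]_n.
Hypothesis m_orth : forall w, aplane 0 u v w -> dotv (gradq A b m) w = 0.

Lemma quadf_plane_center c z : aplane m u v z ->
  quadf A b c z = quadf A b c m + 2^-1 * dotv (z - m) (A *m (z - m)).
Proof.
move=> mz; rewrite -[in LHS](subrK m z) addrC quadfD // m_orth ?addr0 //.
exact: aplane_subr.
Qed.

Lemma quadf_plane_center_lt c z : aplane m u v z -> z != m ->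
  quadf A b c m < quadf A b c z.
Proof.
move=> mz zm; rewrite (quadf_plane_center c mz) ltrDl mulr_gt0 ?invr_gt0 ?ltr0n //.
by apply: posA; rewrite subr_eq0.
Qed.

Lemma quadf_ellipse_axes c s t :
  quadf A b c (m + s *: e1 + t *: e2) = quadf A b c m + 2^-1 * ((s ^+ 2 + t ^+ 2) * r).
Proof.
rewrite quadf_plane_center; last by rewrite -aplane_ellipse_axes; exists s, t.
have -> : m + s *: e1 + t *: e2 - m = s *: e1 + t *: e2 by rewrite addrC addrA addKr.
by rewrite ellipse_axes_formE -!expr2.
Qed.

Lemma plane_level_ellipse c :
  aplane m u v `&` [set z | quadf A b c z = quadf A b c m + 2^-1 * r] = ellipse m e1 e2.
Proof.
rewrite -aplane_ellipse_axes; apply/seteqP; split=> z /=.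
- move=> [[s [t ->]]]; rewrite quadf_ellipse_axes => /addrI level.
  by exists s, t; split=> //; have := r_gt0; nra.
- move=> [s [t [st1 ->]]]; split; first by exists s, t.
  by rewrite quadf_ellipse_axes st1 mul1r.
Qed.

Lemma gradq_ellipse_tangent s t :
  dotv (gradq A b (m + s *: e1 + t *: e2)) (ellipse_tangent e1 e2 s t) = 0.
Proof.
rewrite -addrA gradqD dotvDl m_orth ?add0r; last first.
  by rewrite -aplane_ellipse_axes; exists (- t), s; rewrite add0r.
by rewrite dotvC /ellipse_tangent ellipse_axes_formE; ring.
Qed.

End PlaneRestriction.

Unset Implicit Arguments.
Set Strict Implicit.

Theorem mainTheorem2 (R : realType) (n : nat) (A : 'M[R]_n) (b : 'cV[R]_n)
    (c : R) (xk : 'cV[R]_n) :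
  sym_posdef A ->
  gradq A b xk != 0 ->
  let gx := gradq A b xk in
  let tk := 2 * dotv gx gx / dotv gx (A *m gx) in
  let yk := xk - tk *: gx in
  let gy := gradq A b yk in
  free [:: gx; gy] ->
  let Delta := dotv gy (A *m gy) * dotv gx (A *m gx) - (dotv gx (A *m gy)) ^+ 2 in
  let alpha := (dotv gy gx * dotv gx (A *m gy) - dotv gx gx * dotv gy (A *m gy))
               / Delta in
  let beta := (- (dotv gy gx * dotv gx (A *m gx)) + dotv gx gx * dotv gy (A *m gx))
              / Delta in
  let xk1 := xk + alpha *: gx + beta *: gy in
  let Pi := aplane xk gx gy in
  let L := [set x | quadf A b c x = quadf A b c xk] in
  let E := Pi `&` L in
  [/\ 0 < Delta,
      (exists e1 e2 : 'cV[R]_n,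
         [/\ free [:: e1; e2],
             E = ellipse xk1 e1 e2,
             [/\ Pi xk1, Pi (xk1 + e1), Pi (xk1 + e2), E xk & E yk],
             (forall s t : R, s ^+ 2 + t ^+ 2 = 1 -> xk = xk1 + s *: e1 + t *: e2 ->
                dotv gx (ellipse_tangent e1 e2 s t) = 0) &
             (forall s t : R, s ^+ 2 + t ^+ 2 = 1 -> yk = xk1 + s *: e1 + t *: e2 ->
                dotv gy (ellipse_tangent e1 e2 s t) = 0)]) &
      (Pi xk1 /\ forall z, Pi z -> z != xk1 -> quadf A b c xk1 < quadf A b c z)].
Proof.
move=> [symA posA] gx_neq0 gx tk yk gy free_g Delta alpha beta xk1 Pi L E.
have Delta_gt0 : 0 < Delta := gram_det_gt0 symA posA free_g.
have xk1_orth : forall w, aplane 0 gx gy w -> dotv (gradq A b xk1) w = 0.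
  apply: plane_center_orth => //;
    rewrite -/gx /alpha /beta /Delta (dotv_mulmx_sym gy gx symA) ?(dotvC gx gy);
    by field; exact: lt0r_neq0.
have PiE : Pi = aplane xk1 gx gy by apply: aplane_recenter; exists alpha, beta.
have xk_Pi : aplane xk1 gx gy xk by rewrite -PiE; exact: aplane_base.
have xk_neq_xk1 : xk != xk1.
  apply: contra_neq (lt0r_neq0 (dotvv_gt0 gx_neq0)) => xkE.
  by have := xk1_orth _ (aplane0_dir1 gx gy); rewrite -xkE.
pose r := dotv (xk - xk1) (A *m (xk - xk1)).
have r_gt0 : 0 < r by apply: posA; rewrite subr_eq0.
set e1 := ellipse_axis1 A gx r; set e2 := ellipse_axis2 A gx gy r.
have EE : E = ellipse xk1 e1 e2.
  rewrite /E /L PiE (quadf_plane_center symA xk1_orth c xk_Pi).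
  exact: plane_level_ellipse.
have Pi_axes : Pi = aplane xk1 e1 e2.
  by rewrite PiE (aplane_ellipse_axes symA posA free_g r_gt0).
have Eyk : E yk.
  split; first by rewrite /Pi; exists (- tk), 0; rewrite scale0r addr0 scaleNr.
  by apply: quadf_double_cauchy_step => //; rewrite lt0r_neq0 // posA.
split=> //; last first.
  by rewrite PiE; split=> [|z]; [exact: aplane_base | exact: quadf_plane_center_lt].
exists e1, e2; split=> //.
- exact: free_ellipse_axes.
- split=> //; first by rewrite PiE; exact: aplane_base.
  + by rewrite Pi_axes; exists 1, 0; rewrite scale1r scale0r addr0.
  + by rewrite Pi_axes; exists 0, 1; rewrite scale1r scale0r addr0.
  + by split=> //; exact: aplane_base.
- by move=> s t _ xkE; rewrite /gx xkE; exact: gradq_ellipse_tangent.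
- by move=> s t _ ykE; rewrite /gy ykE; exact: gradq_ellipse_tangent.
Qed.
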